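(* Let $m,\delta>1$ be integers, $n=m\delta$, and let $V^1,V^2$ be two copies of $\mathbb{F}_2^n$, each written as $V^i=V^i_1\times\cdots\times V^i_\delta$ with $V^i_j\cong\mathbb{F}_2^m$ (brick $V^i_j$ consisting of coordinates $(j-1)m,\dots,jm-1$). Let $\gamma\in\mathrm{Sym}(\mathbb{F}_2^n)$ be a parallel S-Box, $(x_1,\dots,x_\delta)\gamma=(x_1\gamma_1,\dots,x_\delta\gamma_\delta)$ with $\gamma_j\in\mathrm{Sym}(\mathbb{F}_2^m)$ and $0\gamma_j\neq0$; let $\lambda$ be an invertible linear map of $\mathbb{F}_2^n$ which is non-type-preserving, and put $\rho=\gamma\lambda$. Let $V=V^1\times V^2$. For $k=(k_1,k_2)\in V$ let $\sigma_k:(x_1,x_2)\mapsto(x_1\boxplus k_1,x_2\boxplus k_2)$, where $\boxplus$ is addition modulo $2^n$ on each component, and let $\mathcal{P}:V\to V$, $(x_1,x_2)\mapsto(x_2,\,x_1\oplus x_2\rho)$, where $\oplus$ is bitwise XOR. Let $\Gamma_\infty=\langle \sigma_k\,\mathcal{P}\,\sigma_h : k,h\in V\rangle\le\mathrm{Sym}(V)$. Then $\Gamma_\infty$ is primitive on $V$.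
   Context: A vector $a=(a_0,\dots,a_{n-1})\in\mathbb{F}_2^n$ is identified with the integer $\sum_i a_i2^i$, and $\boxplus$ is addition of these integers modulo $2^n$. Maps act on the right and are composed left to right. Type of a subset: for $D\subseteq\mathbb{F}_2^n$, its type is the sequence of $\delta$ symbols whose $j$-th entry is ''white'' if the projection of $D$ onto the $j$-th brick has size $1$, ''ruled'' if it has size $t$ with $1<t<2^m$, and ''black'' if it is the whole brick. Non-type-preserving: an invertible linear map $\lambda$ of $\mathbb{F}_2^n$ is non-type-preserving if for every subset $D\subseteq\mathbb{F}_2^n$ whose type is (first $a$ entries white, then $b$ ruled, then $c$ black) with $a,c\ge0$, $b\in\{0,1\}$, $a+b+c=\delta$, not all-white and not all-black, the type of $D\lambda$ differs from the type of $D$. A group $G\le\mathrm{Sym}(V)$ is primitive if it is transitive and preserves no partition of $V$ other than $\{V\}$ and the partition into singletons. *)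

From HB Require Import structures.
From mathcomp Require Import all_boot all_order all_algebra all_fingroup.
From mathcomp Require Import primitive_action.

Set Implicit Arguments.
Unset Strict Implicit.
Unset Printing Implicit Defensive.

Import GRing.Theory.
Local Open Scope ring_scope.

Notation vecF2 n := 'rV['F_2]_n.

Definition int_of n (x : vecF2 n) : nat := (\sum_(i < n) (x ord0 i != 0%R) * 2 ^ i)%N.

Definition vec_of n (a : nat) : vecF2 n := \row_(i < n) ((odd (a %/ 2 ^ i))%:R : 'F_2).

Definition boxplus n (x y : vecF2 n) : vecF2 n := vec_of n ((int_of x + int_of y) %% 2 ^ n).

Lemma int_of_vec n a : int_of (vec_of n a) = (a %% 2 ^ n)%N.
Proof.
rewrite /int_of; elim: n => [|n IH]; first by rewrite big_ord0 expn0 modn1.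
rewrite big_ord_recr /=.
have -> : (\sum_(i < n) ((vec_of n.+1 a) ord0 (widen_ord (leqnSn n) i) != 0%R) * 2 ^ i)%N
        = (\sum_(i < n) ((vec_of n a) ord0 i != 0%R) * 2 ^ i)%N.
  by apply: eq_bigr => i _; rewrite !mxE.
rewrite IH mxE.
have -> : ((odd (a %/ 2 ^ n))%:R != 0 :> 'F_2) = odd (a %/ 2 ^ n).
  by case: odd => //=; rewrite oner_eq0.
rewrite expnS (divn_eq (a %% (2 * 2 ^ n)) (2 ^ n)) -modn_divl modn2.
rewrite modn_dvdm ?dvdn_mull // addnC.
by [].
Qed.

Lemma card_vecF2 n : #|{: vecF2 n}| = (2 ^ n)%N.
Proof. by rewrite card_mx card_Fp // mul1n. Qed.

Lemma vec_of_int n (x : vecF2 n) : vec_of n (int_of x) = x /\ (int_of x < 2 ^ n)%N.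
Proof.
pose f := fun a : 'I_(2 ^ n) => vec_of n a.
have injf : injective f.
  move=> a b /(congr1 (@int_of n)); rewrite !int_of_vec !modn_small //.
  by move/val_inj.
have : x \in codom f.
  by apply: (inj_card_onto injf); rewrite card_ord card_vecF2.
case/codomP=> a ->; rewrite /f int_of_vec modn_small //.
Qed.

Lemma boxplus_inj n (k : vecF2 n) : injective (fun x => boxplus x k).
Proof.
move=> x y /= /(congr1 (@int_of n)); rewrite !int_of_vec !modn_mod.
move/eqP; rewrite eqn_modDr; move/eqP.
have [ex lx] := vec_of_int x; have [ey ly] := vec_of_int y.
by rewrite !modn_small // => e; rewrite -ex -ey e.
Qed.

(* A vector of F_2^(delta*m) is split into delta bricks of size m: brick j
   (j : 'I_delta) consists of coordinates j*m, ..., j*m + m - 1.  Via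
   vec_mx, brick j is the j-th row of the delta x m matrix vec_mx x. *)
Definition brick (delta m : nat) (x : vecF2 (delta * m)) (j : 'I_delta) : vecF2 m :=
  row j (vec_mx x).

Definition parallel_sbox (delta m : nat) (g : 'I_delta -> {perm vecF2 m})
    (x : vecF2 (delta * m)) : vecF2 (delta * m) :=
  mxvec (\matrix_(j < delta, i < m) (g j (brick x j) 0 i)).

Inductive colour := White | Ruled | Black.

Definition has_type (delta m : nat) (D : {set vecF2 (delta * m)})
    (t : 'I_delta -> colour) : Prop :=
  forall j : 'I_delta,
    let s := #|[set brick x j | x in D]| in
    match t j with
    | White => s = 1%N
    | Ruled => (1 < s < 2 ^ m)%N
    | Black => s = (2 ^ m)%N
    end.

Definition std_type (delta a b : nat) (j : 'I_delta) : colour :=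
  if (j < a)%N then White else if (j < a + b)%N then Ruled else Black.
Arguments std_type : clear implicits.

Definition image_lin n (L : 'M['F_2]_n) (D : {set vecF2 n}) : {set vecF2 n} :=
  [set x *m L | x in D].

Definition non_type_preserving (delta m : nat) (L : 'M['F_2]_(delta * m)) : Prop :=
  forall (a b c : nat) (D : {set vecF2 (delta * m)}),
    (b <= 1)%N -> (a + b + c)%N = delta -> a <> delta -> c <> delta ->
    has_type D (std_type delta a b) ->
    ~ has_type (image_lin L D) (std_type delta a b).

Section Gamma.
Variables (delta m : nat).
Local Notation n := (delta * m)%N.
Local Notation Vn := (vecF2 n).
Local Notation V := (Vn * Vn)%type.

Definition sigma_fun (k : V) (x : V) : V := (boxplus x.1 k.1, boxplus x.2 k.2).

Lemma sigma_inj k : injective (sigma_fun k).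
Proof.
move=> [x1 x2] [y1 y2] [/boxplus_inj e1 /boxplus_inj e2].
by rewrite e1 e2.
Qed.

Definition sigma (k : V) : {perm V} := perm (@sigma_inj k).

Definition P_fun (rho : Vn -> Vn) (x : V) : V := (x.2, x.1 + rho x.2).

Lemma P_inj rho : injective (P_fun rho).
Proof.
move=> [x1 x2] [y1 y2] [e2 e1] /=; subst y2.
by move/addIr: e1 => ->.
Qed.

Definition Pperm (rho : Vn -> Vn) : {perm V} := perm (@P_inj rho).

(* Gamma_infty = < sigma_k P sigma_h : k, h in V >; maps act on the right and
   compose left to right, which is MathComp's convention for {perm _}:
   (s * t) x = t (s x). *)
Definition Gamma_infty (rho : Vn -> Vn) : {group {perm V}} :=
  <<[set (sigma k * Pperm rho * sigma h)%g | k in [set: V], h in [set: V]]>>%G.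

End Gamma.

(* Identify V with (Z/2^n)^2 through the integer values of its two halves.
   Gamma_infty contains P and all translations sigma_k, which become additions,
   so a Gamma_infty-invariant partition of V is the coset partition of a
   subgroup U of (Z/2^n)^2; then K = {b | (0, b) in U} is a subgroup of Z/2^n,
   i.e. K = 2^k Z/2^n.  If U is not trivial it has a nonzero element of order 2,
   with coordinates in {0, 2^(n-1)}.  Adding 2^(n-1) only flips the top bit, so
   on such elements modular addition and xor agree, and applying P to suitable
   points yields a nonzero element of K: hence k < n.  Applying P to points that
   differ by (0, d), d in K, shows that rho = gamma lambda maps every coset of K,
   i.e. every set of vectors sharing their first k bits, onto a coset of K.
   For k = 0 the partition is trivial.  Otherwise such a coset has the type
   (white^a, ruled^b, black^c) with k = a m + b (k mod m); gamma preserves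
   types, so lambda would map a set of that type onto one of the same type. *)

From HB Require Import structures.
From mathcomp Require Import all_boot all_order all_algebra all_fingroup.
From mathcomp Require Import primitive_action zify.

Set Implicit Arguments.
Unset Strict Implicit.
Unset Printing Implicit Defensive.

Import GRing.Theory.

Lemma modn_pow2S a k : a %% 2 ^ k.+1 = a %% 2 ^ k + 2 ^ k * odd (a %/ 2 ^ k).
Proof.
rewrite expnS (divn_eq (a %% (2 * 2 ^ k)) (2 ^ k)) -modn_divl modn2.
by rewrite modn_dvdm ?dvdn_mull // addnC mulnC.
Qed.

Lemma eqn_mod_pow2 a b k :
  (a = b %[mod 2 ^ k]) <-> (forall i, i < k -> odd (a %/ 2 ^ i) = odd (b %/ 2 ^ i)).
Proof.
elim: k => [|k IH]; first by rewrite expn0 !modn1.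
have low c : c %% 2 ^ k.+1 %% 2 ^ k = c %% 2 ^ k by rewrite modn_dvdm // dvdn_exp2l.
split=> [eq_ab i | eq_bits].
  have eq_low : a = b %[mod 2 ^ k] by rewrite -low eq_ab low.
  rewrite ltnS leq_eqVlt => /orP[/eqP -> | /(proj1 IH eq_low)] //.
  move: eq_ab; rewrite !modn_pow2S eq_low => /addnI /eqP.
  by rewrite eqn_mul2l expn_eq0 /=; do 2!case: odd.
by rewrite !modn_pow2S (proj2 IH) ?eq_bits // => i /ltnW; apply: eq_bits.
Qed.

Lemma dvdn_Zp_sub p d (a b : 'Z_p) : 1 < p -> d %| p ->
  (d %| (a - b)%R) = (a == b %[mod d]).
Proof.
move=> p_gt1 d_p; have b_lt : b < p by rewrite -[p in _ < p](Zp_cast p_gt1).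
have -> : val (a - b)%R = (a + (p - b)) %% p.
  by case: p p_gt1 d_p a b b_lt => [|[|p']] //= _ _ a b _; rewrite modnDmr.
rewrite {1}/dvdn modn_dvdm // -/(dvdn _ _) addnBA ?(ltnW b_lt) // -eqn_mod_dvd; last first.
  by rewrite (leq_trans (ltnW b_lt)) // leq_addl.
by rewrite -modnDmr (eqP d_p) addn0.
Qed.

Lemma F2_natrb_inj : injective (fun b : bool => b%:R : 'F_2)%R.
Proof. by do 2!case. Qed.

Lemma F2_natr_addb (a b : bool) : ((a (+) b)%:R = a%:R + b%:R :> 'F_2)%R.
Proof. by case: a; case: b; rewrite ?addr0 ?add0r //; apply/eqP. Qed.

Lemma F2_addrr n (v : vecF2 n) : (v + v = 0)%R.
Proof. by apply/rowP => i; rewrite !mxE (addrr_pchar2 (pchar_Fp (erefl : prime 2))). Qed.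

Lemma index_allpairs (T1 T2 : eqType) (s1 : seq T1) (s2 : seq T2) x1 x2 :
  x1 \in s1 -> x2 \in s2 ->
  index (x1, x2) [seq (a, b) | a <- s1, b <- s2] = index x1 s1 * size s2 + index x2 s2.
Proof.
move=> in1 in2; elim: s1 in1 => //= a s1 IH.
rewrite inE; case: (eqVneq x1 a) => [->|ne] /=.
  rewrite mul0n add0n index_cat.
  have -> : (a, x2) \in [seq (a, b) | b <- s2] by apply/mapP; exists x2.
  by rewrite index_map //; move=> u v [].
move=> /IH e; rewrite index_cat.
have -> : (x1, x2) \in [seq (a, b) | b <- s2] = false.
  by apply/negbTE/mapP=> -[b _ [e1 _]]; rewrite e1 eqxx in ne.
by rewrite size_map e mulSn addnA.
Qed.

Lemma val_mxvec_index m n (i : 'I_m) (j : 'I_n) : mxvec_index i j = i * n + j :> nat.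
Proof.
rewrite /mxvec_index /= /enum_rank enum_rank_in.unlock insubdK; last first.
  by rewrite cardE [_ \in _]index_mem mem_enum.
rewrite enumT unlock /= /prod_enum index_allpairs ?mem_enum // size_enum_ord.
by rewrite !index_enum_ord.
Qed.

Section PrefixSets.
Variable n : nat.
Implicit Types (k : nat) (x y : vecF2 n).

Definition prefix_set k x : {set vecF2 n} :=
  [set y : vecF2 n | [forall (i : 'I_n | i < k), y ord0 i == x ord0 i]].

Lemma prefix_set_refl k x : x \in prefix_set k x.
Proof. by rewrite inE; apply/forall_inP. Qed.

Lemma prefix_set_full k x : n <= k -> prefix_set k x = [set x].
Proof.
move=> le_nk; apply/setP => y; rewrite !inE; apply/forall_inP/eqP => [agree | -> //].
by apply/rowP => i; apply/eqP/agree/(leq_trans (ltn_ord i)).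
Qed.

Lemma prefix_set0 x : prefix_set 0 x = setT.
Proof. by apply/setP => y; rewrite !inE; apply/forall_inP. Qed.

Lemma card_prefix_set k x y : #|prefix_set k x| = #|prefix_set k y|.
Proof.
suff -> : prefix_set k y = [set z + (y - x) | z in prefix_set k x]%R.
  by rewrite card_imset //; apply: addIr.
apply/setP => z; rewrite inE; apply/idP/imsetP => [agree | [w + ->]].
  exists (z - (y - x))%R; last by rewrite subrK.
  rewrite inE; apply/forall_inP => i /(forall_inP agree) /eqP.
  by rewrite !mxE => ->; rewrite opprB addrC subrK.
rewrite inE => /forall_inP agree; apply/forall_inP => i /agree /eqP.
by rewrite !mxE => ->; rewrite addrC subrK.
Qed.

Lemma prefix_set_ruled k x : 0 < k < n -> 1 < #|prefix_set k x| < 2 ^ n.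
Proof.
case/andP=> k_gt0 k_lt; have n_gt0 : 0 < n by apply: leq_trans k_lt.
pose flip (i : 'I_n) := (x + delta_mx 0 i)%R.
have flipE i j : flip i ord0 j = (x ord0 j + (i == j)%:R)%R.
  by rewrite !mxE [j == i]eq_sym.
have flip_neq i : flip i ord0 i != x ord0 i.
  by rewrite flipE eqxx -subr_eq0 addrAC subrr add0r oner_eq0.
have last_lt : n.-1 < n by rewrite prednK.
apply/andP; split.
  apply/card_gt1P; exists x, (flip (Ordinal last_lt)); split.
  - exact: prefix_set_refl.
  - rewrite inE; apply/forall_inP => i i_lt; rewrite flipE.
    suff /negPf -> : Ordinal last_lt != i by rewrite addr0.
    by rewrite -val_eqE /=; lia.
  - by apply: contraNneq (flip_neq (Ordinal last_lt)) => ->.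
rewrite -card_vecF2 -cardsT; apply: proper_card; rewrite properT.
apply: contraTneq (flip_neq (Ordinal n_gt0)) => full.
have : flip (Ordinal n_gt0) \in prefix_set k x by rewrite full inE.
by rewrite inE => /forall_inP ->.
Qed.

End PrefixSets.

Section Bricks.
Variables delta m : nat.
Local Notation n := (delta * m).
Implicit Types (x y : vecF2 n) (j : 'I_delta).

Lemma brickE x j l : brick x j ord0 l = x ord0 (mxvec_index j l).
Proof. by rewrite !mxE. Qed.

Lemma brick_prefix_set k x j :
  [set brick y j | y in prefix_set k x] = prefix_set (k - j * m) (brick x j).
Proof.
have idx_lt (l : 'I_m) : (mxvec_index j l < k) = (l < k - j * m).
  by rewrite ltn_subRL val_mxvec_index.
apply/setP => z; apply/imsetP/idP => [[y + ->] | z_agree].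
  rewrite !inE => /forall_inP y_agree; apply/forall_inP => l.
  by rewrite -idx_lt !brickE => /y_agree.
pose y := mxvec (\matrix_(i, l) if i == j then z ord0 l else vec_mx x i l).
exists y; last by apply/rowP => l; rewrite brickE mxvecE mxE eqxx.
rewrite inE; apply/forall_inP => i; case/mxvec_indexP: i => i l.
rewrite /y mxvecE mxE; case: (eqVneq i j) => [-> | _]; last by rewrite mxE.
by rewrite idx_lt -brickE; move: z_agree; rewrite inE => /forall_inP; apply.
Qed.

Lemma prefix_set_type k x : 0 < k < n ->
  has_type (prefix_set k x) (std_type delta (k %/ m) (k %% m != 0)).
Proof.
(* Brick j sees the prefix of length k - j m, so it is white, ruled or black
   according as that length is at least m, in (0, m), or 0. *)
case/andP=> k_gt0 k_lt j; rewrite /= brick_prefix_set /std_type.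
have m_gt0 : 0 < m by case: (posnP m) k_lt => // ->; rewrite muln0.
have k_eq := divn_eq k m; have r_lt : k %% m < m by rewrite ltn_mod.
move: (k %/ m) (k %% m) k_eq r_lt => q r -> r_lt.
have [j_lt | q_le] := ltnP j q.
  rewrite prefix_set_full ?cards1 //.
  have : j.+1 * m <= q * m by rewrite leq_mul2r j_lt orbT.
  lia.
have jm_le : q * m <= j * m by rewrite leq_mul2r q_le orbT.
case: ifP => [j_lt | j_ge].
  have <- : q = j by move: j_lt q_le; case: (r != 0); lia.
  rewrite addKn; apply: prefix_set_ruled; move: j_lt q_le; case: eqP; lia.
rewrite (_ : _ - _ = 0) ?prefix_set0 ?cardsT ?card_vecF2 //; apply/eqP.
rewrite subn_eq0; have : q + (r != 0) <= j by rewrite leqNgt j_ge.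
case: (posnP r) => [-> | _] /=; first by rewrite !addn0.
rewrite addn1 => qj; have : q.+1 * m <= j * m by rewrite leq_mul2r qj orbT.
lia.
Qed.

Lemma brick_parallel_sbox (g : 'I_delta -> {perm vecF2 m}) x j :
  brick (parallel_sbox g x) j = g j (brick x j).
Proof. by apply/rowP => l; rewrite /brick /parallel_sbox mxvecK !mxE. Qed.

Lemma parallel_sbox_type (g : 'I_delta -> {perm vecF2 m}) (D : {set vecF2 n}) t :
  has_type D t -> has_type (parallel_sbox g @: D) t.
Proof.
move=> D_t j; rewrite /= -imset_comp.
rewrite (eq_imset _ (fun x => brick_parallel_sbox g x j)) imset_comp.
by rewrite card_imset; [exact: D_t | exact: perm_inj].
Qed.

End Bricks.

Lemma round_image_not_prefix_set delta m (g : 'I_delta -> {perm vecF2 m})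
    (L : 'M['F_2]_(delta * m)) k (x y : vecF2 (delta * m)) :
  non_type_preserving L -> 0 < k < delta * m ->
  image_lin L (parallel_sbox g @: prefix_set k x) != prefix_set k y.
Proof.
move=> L_ntp /[dup] k_bounds /andP[k_gt0 k_lt]; apply/eqP => image_eq.
have m_gt0 : 0 < m by case: (posnP m) k_lt => // ->; rewrite muln0.
have q_lt : k %/ m < delta by rewrite ltn_divLR.
have b_le1 : (k %% m != 0) <= 1 by case: (k %% m != 0).
apply: (L_ntp _ _ (delta - k %/ m - (k %% m != 0)) _ b_le1 _ _ _
  (parallel_sbox_type g (prefix_set_type x k_bounds))).
- by move: q_lt b_le1; lia.
- by move=> q_eq; rewrite q_eq ltnn in q_lt.
- move: k_gt0; rewrite {1}(divn_eq k m); case: (k %% m =P 0) => [-> | _] /=; lia.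
- by rewrite image_eq; apply: prefix_set_type.
Qed.

Lemma int_of0 n : int_of (0 : vecF2 n)%R = 0.
Proof. by rewrite /int_of big1 // => i _; rewrite mxE eqxx. Qed.

Lemma boxplusr0 n (x : vecF2 n) : boxplus x 0%R = x.
Proof. by rewrite /boxplus int_of0 addn0; case: (vec_of_int x) => x_eq x_lt; rewrite modn_small. Qed.

Lemma boxplus0r n (x : vecF2 n) : boxplus 0%R x = x.
Proof. by rewrite /boxplus int_of0 add0n; case: (vec_of_int x) => x_eq x_lt; rewrite modn_small. Qed.

Section GammaGenerators.
Variables delta m : nat.
Variable rho : vecF2 (delta * m) -> vecF2 (delta * m).
Local Notation V := (vecF2 (delta * m) * vecF2 (delta * m))%type.
Local Notation G := (Gamma_infty rho).

Lemma sigma0 : sigma ((0, 0)%R : V) = 1%g.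
Proof. by apply/permP => -[x1 x2]; rewrite perm1 permE /sigma_fun /= !boxplusr0. Qed.

Lemma Pperm_Gamma : Pperm rho \in G.
Proof.
have -> : Pperm rho = (sigma (0, 0)%R * Pperm rho * sigma (0, 0)%R)%g by rewrite sigma0 mul1g mulg1.
by apply: mem_gen; apply/imset2P; exists (0, 0)%R (0, 0)%R.
Qed.

Lemma sigma_Gamma k : sigma k \in G.
Proof.
have -> : sigma k = (sigma k * Pperm rho * sigma (0, 0)%R * (Pperm rho)^-1)%g.
  by rewrite sigma0 mulg1 mulgK.
by rewrite groupM ?groupV ?Pperm_Gamma //; apply: mem_gen; apply/imset2P; exists k (0, 0)%R.
Qed.

Lemma PpermV y : ((Pperm rho)^-1)%g y = (y.2 + rho y.1, y.1)%R.
Proof.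
apply: (@perm_inj _ (Pperm rho)); rewrite permKV permE /P_fun /=.
by rewrite -addrA F2_addrr addr0; case: y.
Qed.

Lemma Gamma_transitive : [transitive G, on [set: V] | 'P].
Proof.
apply/imsetP; exists (0, 0)%R => //; apply/setP => y; rewrite inE; apply/esym/orbitP.
exists (sigma y); first exact: sigma_Gamma.
by rewrite [LHS]apermE permE /sigma_fun /= !boxplus0r; case: y.
Qed.

End GammaGenerators.

Section BlockSystems.
Variables (T : finType) (Q : {set {set T}}).
Hypothesis Q_part : partition Q [set: T].

Lemma pblock_in_partition x : pblock Q x \in Q.
Proof. by case/and3P: Q_part => /eqP cover_T _ _; rewrite pblock_mem // cover_T. Qed.

Lemma same_block_perm (G : {group {perm T}}) a x y :
  [acts G, on Q | 'P^*] -> a \in G ->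
  pblock Q x = pblock Q y -> pblock Q (a x) = pblock Q (a y).
Proof.
move=> G_Q a_G; have [/eqP cover_T triv_Q _] := and3P Q_part.
suff pblock_a z : pblock Q (a z) = ('P^*)%act (pblock Q z) a by rewrite !pblock_a => ->.
apply: def_pblock => //; first by rewrite (actsP G_Q) ?pblock_in_partition.
by rewrite -[a z]/(aperm z a) mem_setact // mem_pblock cover_T.
Qed.

Lemma exists_same_block : #|Q| < #|T| ->
  exists x y, x != y /\ pblock Q x = pblock Q y.
Proof.
move=> card_lt; suff /injectivePn[x [y x_neq_y same_xy]] : ~~ injectiveb (pblock Q).
  by exists x, y.
apply: contraTN card_lt => /injectiveP pblock_inj; rewrite -leqNgt -(card_imset _ pblock_inj).
by apply/subset_leq_card/subsetP => _ /imsetP[x _ ->]; apply: pblock_in_partition.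
Qed.

Lemma card_partition_le1 : (forall x y, pblock Q x = pblock Q y) -> #|Q| <= 1.
Proof.
have [_ triv_Q set0_Q] := and3P Q_part.
move=> same_all; apply/card_le1_eqP => B1 B2 B1_Q B2_Q.
have [x1 x1_B1] : exists x, x \in B1 by apply/set0Pn; apply: contraNneq set0_Q => <-.
have [x2 x2_B2] : exists x, x \in B2 by apply/set0Pn; apply: contraNneq set0_Q => <-.
by rewrite -(def_pblock triv_Q B1_Q x1_B1) -(def_pblock triv_Q B2_Q x2_B2).
Qed.

End BlockSystems.

Local Open Scope ring_scope.

Lemma exists_order2 (V : zmodType) (u : V) e : u != 0 -> u *+ 2 ^ e = 0 ->
  exists t, u *+ t != 0 /\ u *+ t *+ 2 = 0.
Proof.
move=> u_neq0; elim: e => [|e IH]; first by rewrite expn0 => /eqP; rewrite (negPf u_neq0).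
have [/IH u_e0 _ | u_e_neq0 u_e1_0] := eqVneq (u *+ 2 ^ e) 0; first exact: u_e0.
by exists (2 ^ e)%N; rewrite -mulrnA -expnSr.
Qed.

Lemma zmod_closed_mulrn (V : zmodType) (S : {pred V}) x t :
  zmod_closed S -> x \in S -> x *+ t \in S.
Proof.
by case/GRing.zmod_closedD => S0 SD Sx; elim: t => [|t]; rewrite ?mulr0n // mulrS; apply: SD.
Qed.

Lemma Zp_subgroup p (K : {set 'Z_p}) : (1 < p)%N -> zmod_closed K ->
  exists2 d, (d %| p)%N & K = [set z : 'Z_p | (d %| z)%N].
Proof.
move=> p_gt1 K_zmod; have [K0 KB] := K_zmod.
have Kp : (p%:R : 'Z_p) \in K.
  by rewrite (_ : p%:R = 0) //; apply: val_inj; rewrite /= val_Zp_nat // modnn.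
have ex_d : exists d, (0 < d)%N && ((d%:R : 'Z_p) \in K).
  by exists p; rewrite Kp (ltnW p_gt1).
(* d is the least positive integer in K; division by d leaves remainders in K. *)
case: (ex_minnP ex_d) => d /andP[d_gt0 Kd] d_min.
have Kmult t : ((t * d)%:R : 'Z_p) \in K by rewrite mulnC mulrnA zmod_closed_mulrn.
have dvd_of_K a : (a%:R : 'Z_p) \in K -> (d %| a)%N.
  move=> Ka; have Kr : ((a %% d)%:R : 'Z_p) \in K.
    have -> : (a %% d)%:R = a%:R - (a %/ d * d)%:R :> 'Z_p.
      by rewrite {2}(divn_eq a d) natrD [X in X - _]addrC addrK.
    exact: KB.
  apply: contraTT (ltn_pmod a d_gt0) => r_neq0; rewrite -leqNgt d_min //.
  by rewrite lt0n r_neq0.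
exists d; first by apply: dvd_of_K.
apply/setP => z; rewrite inE; apply/idP/idP => [Kz | /dvdnP[t z_eq]].
  by apply: dvd_of_K; rewrite natr_Zp.
by rewrite -(natr_Zp z) z_eq Kmult.
Qed.

Lemma pairB (V1 V2 : zmodType) (a c : V1) (b d : V2) : (a, b) - (c, d) = (a - c, b - d).
Proof. by []. Qed.

Section BinaryEncoding.
Variable n : nat.
(* For n = 0, ['Z_(2 ^ n)] is ['Z_1], which MathComp defines as ['Z_2]. *)
Hypothesis n_gt0 : (0 < n)%N.
Local Notation Vn := (vecF2 n).
Local Notation Zn := 'Z_(2 ^ n).

Lemma pow2_gt1 : (1 < 2 ^ n)%N.
Proof. by rewrite -{1}(expn0 2) ltn_exp2l. Qed.

Definition zof (x : Vn) : Zn := (int_of x)%:R.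
Definition vof (z : Zn) : Vn := vec_of n z.

Lemma val_zof x : zof x = int_of x :> nat.
Proof. by rewrite val_Zp_nat ?pow2_gt1 // modn_small //; case: (vec_of_int x). Qed.

Lemma zofK : cancel zof vof.
Proof. by move=> x; rewrite /vof val_zof; case: (vec_of_int x). Qed.

Lemma vofK : cancel vof zof.
Proof.
move=> z; apply: val_inj => /=; rewrite val_zof int_of_vec modn_small //.
by rewrite -[X in (_ < X)%N](Zp_cast pow2_gt1).
Qed.

Lemma vof_inj : injective vof. Proof. exact: can_inj vofK. Qed.

Lemma vof0 : vof 0 = 0%R.
Proof. by apply/rowP => i; rewrite !mxE div0n. Qed.

Lemma zof_vec_of a : zof (vec_of n a) = a%:R.
Proof.
by apply: val_inj => /=; rewrite val_zof int_of_vec val_Zp_nat ?pow2_gt1.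
Qed.

Lemma boxplusE x y : boxplus x y = vof (zof x + zof y).
Proof.
apply: (can_inj zofK); rewrite vofK zof_vec_of /zof -natrD.
by apply: val_inj => /=; rewrite !val_Zp_nat ?pow2_gt1 // modn_mod.
Qed.

Definition half : Zn := (2 ^ n.-1)%:R.

Lemma val_half : half = (2 ^ n.-1)%N :> nat.
Proof. by rewrite val_Zp_nat ?pow2_gt1 // modn_small // ltn_exp2l // prednK. Qed.

Lemma half_neq0 : half != 0%R.
Proof. by apply/eqP => /(congr1 val) /=; rewrite val_half; apply/eqP; rewrite expn_eq0. Qed.

Lemma Zp2_order2 (z : Zn) : z *+ 2 = 0 -> z = 0 \/ z = half.
Proof.
move=> z2; have z_lt : (z < 2 ^ n)%N by rewrite -[X in (_ < X)%N](Zp_cast pow2_gt1).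
have : (z * 2)%N%:R = 0 :> Zn by rewrite -[RHS]z2 -{2}(natr_Zp z) mulrnA.
move/(congr1 val) => /=; rewrite val_Zp_nat ?pow2_gt1 // => z_mod.
have [z0|zh] : z = 0%N :> nat \/ z = (2 ^ n.-1)%N :> nat.
- move: (nat_of_ord z) z_lt z_mod => a.
  have -> : (2 ^ n = 2 ^ n.-1 * 2)%N by rewrite -expnSr prednK.
  rewrite -muln_modl => a_lt /eqP; rewrite muln_eq0 orbF => /eqP a_mod.
  move: a_lt; rewrite (divn_eq a (2 ^ n.-1)) a_mod addn0 [(_ * 2)%N]mulnC.
  rewrite ltn_pmul2r ?expn_gt0 //.
  by case: (a %/ _)%N => [|[|//]] _; [left | right; rewrite mul1n].
- by left; apply: val_inj.
- by right; apply: val_inj; rewrite /= zh val_half.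
Qed.

Lemma coord_int_of (x : Vn) (i : 'I_n) : x ord0 i = (odd (int_of x %/ 2 ^ i))%:R.
Proof. by rewrite -{1}(zofK x) mxE val_zof. Qed.

Lemma vof_natr a : vof a%:R = vec_of n a.
Proof.
apply/rowP => i; rewrite !mxE val_Zp_nat ?pow2_gt1 //.
by rewrite (proj1 (eqn_mod_pow2 (a %% 2 ^ n) a n)) ?modn_mod.
Qed.

Lemma addr_vof_half (x : Vn) : x + vof half = vof (zof x + half).
Proof.
rewrite /zof -natrD vof_natr; apply/rowP => i; rewrite !mxE coord_int_of val_half.
have i_le : (i <= n.-1)%N by rewrite -ltnS prednK.
have -> : (2 ^ n.-1 = 2 ^ (n.-1 - i) * 2 ^ i)%N by rewrite -expnD subnK.
rewrite mulnK ?expn_gt0 // divnDMl ?expn_gt0 // oddD F2_natr_addb.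
by rewrite oddX.
Qed.

Lemma natr_pow2 : (2 ^ n)%:R = 0 :> Zn.
Proof. by apply: val_inj => /=; rewrite val_Zp_nat ?pow2_gt1 // modnn. Qed.

Lemma mulrn_pow2 (z : Zn) : z *+ 2 ^ n = 0.
Proof. by rewrite -mulr_natr natr_pow2 mulr0. Qed.

Lemma half_add_half : half + half = 0.
Proof. by rewrite -natrD addnn -mul2n -expnS prednK // natr_pow2. Qed.

Lemma oppr_half : - half = half.
Proof. by apply/esym/eqP; rewrite -addr_eq0 half_add_half. Qed.

Lemma prefix_setE k (x y : Vn) : (k <= n)%N ->
  (y \in prefix_set k x) = (2 ^ k %| (zof y - zof x)%R)%N.
Proof.
move=> k_le; rewrite inE dvdn_Zp_sub ?pow2_gt1 ?dvdn_exp2l // !val_zof.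
apply/forall_inP/eqP => [agree | /eqn_mod_pow2 same_bits i i_lt].
  apply/eqn_mod_pow2 => i i_lt; have i_n := leq_trans i_lt k_le.
  by apply: F2_natrb_inj; rewrite -!(coord_int_of _ (Ordinal i_n)); apply/eqP/agree.
by rewrite !coord_int_of same_bits.
Qed.

End BinaryEncoding.

Section Primitivity.
Variables (m delta : nat) (g : 'I_delta -> {perm vecF2 m}) (L : 'M['F_2]_(delta * m)).
Hypotheses (n_gt0 : (0 < delta * m)%N) (L_unit : L \in unitmx).
Local Notation n := (delta * m).
Local Notation Vn := (vecF2 n).
Local Notation V := (Vn * Vn)%type.
Local Notation Zn := 'Z_(2 ^ n).

Definition rho (x : Vn) : Vn := parallel_sbox g x *m L.

Lemma rho_inj : injective rho.
Proof.
move=> x y /(congr1 (mulmx^~ (invmx L))); rewrite !mulmxK // => sbox_eq.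
apply: (can_inj vec_mxK); apply/row_matrixP => j.
by apply: (@perm_inj _ (g j)); rewrite -!brick_parallel_sbox sbox_eq.
Qed.

Variable Q : {set {set V}}.
Hypotheses (Q_part : partition Q [set: V]) (Q_acts : [acts Gamma_infty rho, on Q | 'P^*]).

Local Notation same x y := (pblock Q x = pblock Q y).

Lemma same_sigma k x y : same x y -> same (sigma k x) (sigma k y).
Proof. exact: (same_block_perm Q_part Q_acts (sigma_Gamma rho k)). Qed.

Lemma same_P x y : same x y -> same (P_fun rho x) (P_fun rho y).
Proof. by move/(same_block_perm Q_part Q_acts (Pperm_Gamma rho)); rewrite !permE. Qed.

Lemma same_Pinv x y : same x y -> same (x.2 + rho x.1, x.1) (y.2 + rho y.1, y.1).
Proof. by move/(same_block_perm Q_part Q_acts (groupVr (Pperm_Gamma rho))); rewrite !PpermV. Qed.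

Definition vof2 (u : Zn * Zn) : V := (vof u.1, vof u.2).

Lemma vof2_zof x : vof2 (zof x.1, zof x.2) = x.
Proof. by case: x => x1 x2; rewrite /vof2 /= !(zofK n_gt0). Qed.

Lemma vof2_0 : vof2 0 = (0, 0).
Proof. by rewrite /vof2 /= vof0. Qed.

Lemma sigma_vof2 u w : sigma (vof2 w) (vof2 u) = vof2 (u + w).
Proof. by rewrite permE /sigma_fun /= !(boxplusE n_gt0) ?(vofK n_gt0). Qed.

Definition U : {set Zn * Zn} := [set u | pblock Q (vof2 u) == pblock Q (vof2 0)].

Lemma same_vof2E u v : same (vof2 u) (vof2 v) <-> u - v \in U.
Proof.
rewrite inE; split => [/(same_sigma (vof2 (- v))) | /eqP/(same_sigma (vof2 v))].
  by rewrite !sigma_vof2 subrr => ->.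
by rewrite !sigma_vof2 subrK add0r.
Qed.

Lemma U_zmod_closed : zmod_closed U.
Proof.
split=> [|u v]; first by rewrite inE.
by move=> Uu Uv; apply/same_vof2E; move: Uu Uv; rewrite !inE => /eqP-> /eqP->.
Qed.

Definition K : {set Zn} := [set b | (0, b) \in U].

Lemma memK b : (b \in K) = ((0, b) \in U).
Proof. by rewrite inE. Qed.

Lemma K_zmod_closed : zmod_closed K.
Proof.
split=> [|a b]; rewrite !memK; first by case: U_zmod_closed.
by move=> Ua Ub; have := (proj2 U_zmod_closed) _ _ Ua Ub; rewrite pairB subrr.
Qed.

Lemma memU_mulrn u t : u \in U -> u *+ t \in U.
Proof. exact/zmod_closed_mulrn/U_zmod_closed. Qed.

Lemma U_nontrivial : (#|Q| < #|{: V}|)%N -> exists2 u, u \in U & u != 0.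
Proof.
case/(exists_same_block Q_part) => x [y [x_neq_y same_xy]].
exists ((zof x.1, zof x.2) - (zof y.1, zof y.2)); first by apply/same_vof2E; rewrite !vof2_zof.
rewrite subr_eq0; apply: contra x_neq_y => /eqP[eq1 eq2].
by rewrite -(vof2_zof x) -(vof2_zof y) eq1 eq2.
Qed.

Lemma U_order2 : (#|Q| < #|{: V}|)%N -> exists2 u, u \in U & u != 0 /\ u *+ 2 = 0.
Proof.
case/U_nontrivial => u Uu u_neq0.
have [|t [ut_neq0 ut2]] := exists_order2 (e := n) u_neq0.
  by rewrite pairMnE !(mulrn_pow2 n_gt0).
by exists (u *+ t); rewrite ?memU_mulrn.
Qed.

Local Notation h := (half n).

(* P maps (0 rho [+] h, 0) and (0 rho, 0) to (0, h) and (0, 0). *)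
Lemma K_half_of_U : (h, 0) \in U -> h \in K.
Proof.
move=> U_h0; have : same (vof2 (zof (rho 0) + h, 0)) (vof2 (zof (rho 0), 0)).
  by apply/same_vof2E; rewrite pairB [_ + h]addrC addrK subrr.
move/same_P; rewrite /P_fun /vof2 /= vof0 (zofK n_gt0) -(addr_vof_half n_gt0) addrAC F2_addrr add0r.
by rewrite memK inE vof2_0 /vof2 /= vof0 => ->.
Qed.

(* P maps (0 rho, h) and (0 rho [+] h, 0), which differ by (h, h), to
   (h, 0 rho + h rho) and (0, h); subtracting (h, h) leaves (0, 0 rho + h rho),
   which is nonzero because rho is injective. *)
Lemma K_nontrivial_of_U_half : (h, h) \in U -> exists2 b, b \in K & b != 0.
Proof.
move=> U_hh; have : same (vof2 (zof (rho 0), h)) (vof2 (zof (rho 0) + h, 0)).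
  by apply/same_vof2E; rewrite pairB opprD addrA subrr add0r (oppr_half n_gt0) subr0.
move/same_P; rewrite /P_fun /vof2 /= vof0 (zofK n_gt0) -(addr_vof_half n_gt0) addrAC F2_addrr add0r.
set e := rho 0 + rho (vof h); have vof2_0h : vof2 (0, h) = (0, vof h) by rewrite /vof2 vof0.
rewrite -[e](zofK n_gt0) -vof2_0h -[(vof h, _)]/(vof2 (h, zof e)) => /same_vof2E.
rewrite pairB subr0 => U_he.
exists (zof e).
  have := proj2 U_zmod_closed _ _ U_he U_hh.
  by rewrite pairB subrr memK -addrA -opprD (half_add_half n_gt0) subr0.
apply: contraNneq (half_neq0 n_gt0) => /(congr1 (@vof n)); rewrite (zofK n_gt0) vof0 => e0.
have rho_eq : rho 0 = rho (vof h).
  by apply: (addIr (rho (vof h))); rewrite F2_addrr.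
by move/rho_inj: rho_eq; rewrite -vof0 => /(vof_inj n_gt0) ->.
Qed.

Lemma K_nontrivial : (#|Q| < #|{: V}|)%N -> exists2 b, b \in K & b != 0.
Proof.
case/U_order2 => -[c d] U_cd [cd_neq0 cd2].
have /(Zp2_order2 n_gt0) c_2 : c *+ 2 = 0 by have := congr1 fst cd2; rewrite pairMnE.
have /(Zp2_order2 n_gt0) d_2 : d *+ 2 = 0 by have := congr1 snd cd2; rewrite pairMnE.
case: c_2 d_2 U_cd cd_neq0 => -> [] -> U_cd cd_neq0.
- by rewrite eqxx in cd_neq0.
- by exists h; rewrite ?memK ?half_neq0.
- by exists h; rewrite ?K_half_of_U ?half_neq0.
- exact: K_nontrivial_of_U_half.
Qed.

(* P^-1 maps (z, b) and (z, 0), where z rho = 0, to (b, z) and (0, z). *)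
Lemma memU_swap b : b \in K -> (b, 0) \in U.
Proof.
rewrite memK => U_0b; pose z := invF rho_inj 0; have rho_z : rho z = 0 := f_invF rho_inj 0.
have : same (vof2 (zof z, b)) (vof2 (zof z, 0)) by apply/same_vof2E; rewrite pairB subrr subr0.
move/same_Pinv; rewrite /vof2 /= !(zofK n_gt0) rho_z !addr0 -[z](zofK n_gt0).
rewrite -[(vof b, _)]/(vof2 (b, zof z)) -[(vof 0, _)]/(vof2 (0, zof z)) => /same_vof2E.
by rewrite pairB subr0 subrr.
Qed.

(* P maps (0, x) and (0, y) to (x, x rho) and (y, y rho). *)
Lemma rho_congr x y : zof y - zof x \in K -> zof (rho y) - zof (rho x) \in K.
Proof.
move=> K_yx; have : same (vof2 (0, zof y)) (vof2 (0, zof x)).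
  by apply/same_vof2E; rewrite pairB subrr -memK.
move/same_P; rewrite /P_fun /vof2 /= !(zofK n_gt0) vof0 !add0r.
rewrite -[(y, _)]vof2_zof -[(x, _)]vof2_zof => /same_vof2E; rewrite pairB /= => U_diff.
by have := proj2 U_zmod_closed _ _ U_diff (memU_swap K_yx); rewrite pairB subrr subr0 memK.
Qed.

Lemma same_all : (forall b, b \in K) -> forall x y, same x y.
Proof.
move=> K_all; have same_fst x y : x.1 = y.1 -> same x y.
  by move=> eq1; rewrite -(vof2_zof x) -(vof2_zof y) eq1; apply/same_vof2E; rewrite pairB subrr -memK.
move=> [x1 x2] y; have := same_P (same_fst (x2 + rho x1, x1) (x2 + rho x1, y.1) erefl).
by rewrite {1}/P_fun /= -addrA F2_addrr addr0 => ->; apply: same_fst.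
Qed.

Lemma K_structure : (#|Q| < #|{: V}|)%N ->
  exists2 k, (k < n)%N & K = [set z : Zn | (2 ^ k %| z)%N].
Proof.
move=> Q_lt; have [d d_dvd K_eq] := Zp_subgroup (pow2_gt1 n_gt0) K_zmod_closed.
case/(dvdn_pfactor _ _ (isT : prime 2)): d_dvd => k k_le d_eq; rewrite d_eq in K_eq.
exists k => //; rewrite ltn_neqAle k_le andbT; apply/eqP => k_eq.
have [b + b_neq0] := K_nontrivial Q_lt; rewrite K_eq inE k_eq /dvdn modn_small => [b0|].
  by move: b_neq0; rewrite -val_eqE /= (eqP b0).
by rewrite -[X in (_ < X)%N](Zp_cast (pow2_gt1 n_gt0)).
Qed.

Lemma no_proper_block_system : non_type_preserving L -> ~~ (1 < #|Q| < #|{: V}|)%N.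
Proof.
move=> L_ntp; apply/andP => -[Q_gt1 Q_lt]; have [k k_lt K_eq] := K_structure Q_lt.
have [k0 | k_gt0] := posnP k.
  suff : (#|Q| <= 1)%N by rewrite leqNgt Q_gt1.
  by apply: card_partition_le1 Q_part _; apply: same_all => b; rewrite K_eq inE k0 dvd1n.
have memP x y : (y \in prefix_set k x) = (zof y - zof x \in K).
  by rewrite (prefix_setE n_gt0 _ _ (ltnW k_lt)) K_eq inE.
have rho_prefix x : rho @: prefix_set k x = prefix_set k (rho x).
  apply/eqP; rewrite eqEcard (card_imset _ rho_inj) (card_prefix_set _ (rho x) x) leqnn andbT.
  by apply/subsetP => _ /imsetP[y + ->]; rewrite !memP; apply: rho_congr.
have k_bounds : (0 < k < n)%N by rewrite k_gt0 k_lt.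
have := round_image_not_prefix_set g 0 (rho 0) L_ntp k_bounds.
by rewrite /image_lin -imset_comp -[X in X != _]/(rho @: _) rho_prefix eqxx.
Qed.

End Primitivity.

Theorem mainTheorem3 (m delta : nat) (hm : (1 < m)%N) (hdelta : (1 < delta)%N)
    (g : 'I_delta -> {perm 'rV['F_2]_m})
    (hg : forall j : 'I_delta, g j 0%R != 0%R)
    (L : 'M['F_2]_(delta * m))
    (hLinv : L \in unitmx)
    (hLntp : non_type_preserving L) :
  [primitive @Gamma_infty delta m (fun x => (parallel_sbox g x *m L)%R),
     on [set: 'rV['F_2]_(delta * m) * 'rV['F_2]_(delta * m)] | 'P].
Proof.
have n_gt0 : (0 < delta * m)%N by rewrite muln_gt0 (ltnW hdelta) (ltnW hm).
apply/andP; split; first exact: Gamma_transitive.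
apply/existsP => -[Q /and3P[Q_part Q_acts Q_card]].
by move: Q_card; rewrite cardsT; apply/negP/(no_proper_block_system n_gt0 hLinv Q_part Q_acts).
Qed.
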